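(* If $G$ is a connected, claw-free cubic graph, then $\sigma_{(3,1)}(G) \le \beta(G) + 1$. Moreover, this bound is sharp: there exist connected, claw-free cubic graphs $G$ with $\sigma_{(3,1)}(G) = \beta(G)+1$.
   Context: A graph is claw-free if it has no induced subgraph isomorphic to $K_{1,3}$; it is cubic if every vertex has degree $3$. $\beta(G)$ denotes the vertex covering number (minimum size of a set of vertices meeting every edge). $(p,q)$-spreading: let $p\in\mathbb{N}$ and $q\in\mathbb{N}\cup\{\infty\}$. Start with a set $S\subseteq V(G)$ of blue vertices, all other vertices white. The color change rule: if a white vertex $w$ has at least $p$ blue neighbors, and at least one of the blue neighbors of $w$ has at most $q$ white neighbors, then $w$ is recolored blue. $S$ is a $(p,q)$-spreading set if repeatedly applying this rule eventually colors all vertices blue. $\sigma_{(p,q)}(G)$ is the minimum cardinality of a $(p,q)$-spreading set of $G$. *)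

From mathcomp Require Import all_boot.
Set Implicit Arguments. Unset Strict Implicit. Unset Printing Implicit Defensive.

Section Graphs.
Variable T : finType.
Variable e : rel T.

Definition simple_graph : Prop := symmetric e /\ irreflexive e.

Definition nbhd (x : T) : {set T} := [set y | e x y].

Definition cubic : Prop := forall x : T, #|nbhd x| = 3.

Definition connected_graph : Prop := forall x y : T, connect e x y.

Definition claw_free : Prop :=
  forall x a b c : T, e x a -> e x b -> e x c ->
    a != b -> a != c -> b != c -> [|| e a b, e a c | e b c].

Definition vertex_cover (C : {set T}) : bool :=
  [forall x, forall y, e x y ==> (x \in C) || (y \in C)].

Definition beta : nat :=
  #| [arg min_(C < setT | vertex_cover C) #|C| ] |.

(* (p,q)-spreading. One application of the colour change rule: from
   blue set B, a white vertex w with at least p blue neighbours, one of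
   which has at most q white neighbours, is recoloured blue. *)
Definition can_recolor (p q : nat) (B : {set T}) (w : T) : bool :=
  [&& w \notin B, p <= #|nbhd w :&: B|
    & [exists u in nbhd w :&: B, #|nbhd u :\: B| <= q]].

Definition spread_step (p q : nat) : rel {set T} :=
  fun B B' => [exists w, can_recolor p q B w && (B' == w |: B)].

Definition spreading_set (p q : nat) (S : {set T}) : bool :=
  connect (spread_step p q) S setT.

Definition sigma (p q : nat) : nat :=
  #| [arg min_(S < setT | spreading_set p q S) #|S| ] |.

End Graphs.

From mathcomp Require Import all_boot zify.
Set Implicit Arguments. Unset Strict Implicit. Unset Printing Implicit Defensive.

(* Let C be a minimum vertex cover and v a vertex outside it.  Starting from
   any blue set B containing C and v, the spreading cannot stop before every
   vertex is blue.  A white vertex lies outside C, so all its neighbours are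
   blue; if none of them has at most one white neighbour, each has a second
   white neighbour, and since white vertices are pairwise non-adjacent,
   claw-freeness forces every neighbour of a vertex adjacent to a white
   vertex to be white or adjacent to a white vertex.  By connectivity v
   would then be adjacent to a white vertex, which is impossible as v is
   outside C.  Hence C + v spreads and sigma <= beta + 1.

   Conversely, a (3,q)-spreading set of a cubic graph is a vertex cover.  If
   a vertex cover C satisfies 2|C| <= 3|V \ C|, double counting the edges
   between C and the independent set V \ C, in which every vertex of C has
   at most two neighbours by claw-freeness, shows that every vertex of C has
   exactly two white neighbours, so no vertex can ever be recolored.  The
   ten-vertex example below has beta = 6 = 3/5 of its order, so sigma = 7. *)

Lemma connect_preserve (T : finType) (r : rel T) (A : {pred T}) :
  (forall x y, r x y -> x \in A -> y \in A) ->
  forall x y, connect r x y -> x \in A -> y \in A.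
Proof.
move=> closedA x y /connectP [s]; elim: s x => [|z s IH] x /=; first by move=> _ ->.
by case/andP=> rxz rs ly /(closedA _ _ rxz); apply: IH.
Qed.

Section SpreadingBasics.
Variables (T : finType) (e : rel T).

Lemma vertex_coverP (C : {set T}) :
  reflect (forall x y, e x y -> (x \in C) || (y \in C)) (vertex_cover e C).
Proof.
apply: (iffP forallP) => [cover x y | cover x].
  by move: (cover x) => /forallP /(_ y) /implyP.
by apply/forallP => y; apply/implyP; apply: cover.
Qed.

Lemma vertex_cover_edge (C : {set T}) x y :
  vertex_cover e C -> e x y -> (x \in C) || (y \in C).
Proof. by move/vertex_coverP; apply. Qed.

Lemma vertex_cover_setT : vertex_cover e setT.
Proof. by apply/vertex_coverP => x y _; rewrite inE. Qed.

Lemma beta_le (C : {set T}) : vertex_cover e C -> beta e <= #|C|.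
Proof.
rewrite /beta; case: (arg_minnP (fun C : {set T} => #|C|) vertex_cover_setT).
by move=> C0 _ min /min.
Qed.

Lemma beta_cover : exists2 C, vertex_cover e C & beta e = #|C|.
Proof.
rewrite /beta; case: (arg_minnP (fun C : {set T} => #|C|) vertex_cover_setT).
by move=> C0 coverC0 _; exists C0.
Qed.

Lemma spreading_setT p q : spreading_set e p q setT.
Proof. exact: connect0. Qed.

Lemma sigma_le p q (S : {set T}) : spreading_set e p q S -> sigma e p q <= #|S|.
Proof.
rewrite /sigma; case: (arg_minnP (fun S : {set T} => #|S|) (spreading_setT p q)).
by move=> S0 _ min /min.
Qed.

Lemma sigma_spreading p q : exists2 S, spreading_set e p q S & sigma e p q = #|S|.
Proof.
rewrite /sigma; case: (arg_minnP (fun S : {set T} => #|S|) (spreading_setT p q)).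
by move=> S0 spreadS0 _; exists S0.
Qed.

Lemma spreading_recolor p q (B : {set T}) w :
  can_recolor e p q B w -> spreading_set e p q (w |: B) -> spreading_set e p q B.
Proof.
move=> recolor_w; apply: connect_trans; apply: connect1.
by apply/existsP; exists w; rewrite recolor_w eqxx.
Qed.

Lemma spreading_stuck p q (B : {set T}) :
  (forall w, ~~ can_recolor e p q B w) -> spreading_set e p q B -> B = setT.
Proof.
move=> stuck /connectP [[|B' s] /=]; first by move=> _ ->.
case/andP=> /existsP [w /andP [recolor_w _]].
by rewrite (negbTE (stuck w)) in recolor_w.
Qed.

Lemma recolor_nbhd_sub p q (B : {set T}) w :
  #|nbhd e w| <= p -> can_recolor e p q B w -> nbhd e w \subset B.
Proof.
move=> deg_w /and3P [_ blue_nbrs _]; apply/setIidPl/eqP.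
by rewrite eqEcard subsetIl (leq_trans deg_w blue_nbrs).
Qed.

Lemma spreading_vertex_cover p q (S : {set T}) :
  symmetric e -> (forall x, #|nbhd e x| <= p) ->
  spreading_set e p q S -> vertex_cover e S.
Proof.
move=> sym deg spreadS; apply/vertex_coverP => x y exy.
apply/contraT; rewrite negb_or => xyS.
pose white_edge := [pred B : {set T} | (x \notin B) && (y \notin B)].
suff : setT \in white_edge by rewrite inE /= inE.
apply: (connect_preserve _ spreadS xyS) => B _ /existsP [w /andP [recolor_w /eqP ->]].
have /subsetP nbrs_blue := recolor_nbhd_sub (deg w) recolor_w.
case/andP=> xB yB; rewrite !inE !negb_or xB yB !andbT.
apply/andP; split; apply/eqP => eq_w.
  by move: yB; rewrite nbrs_blue // inE -eq_w.
by move: xB; rewrite nbrs_blue // inE -eq_w sym.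
Qed.

End SpreadingBasics.

Arguments vertex_coverP {T e C}.

Section CoverPlusVertex.
Variables (T : finType) (e : rel T) (p : nat).
Hypotheses (sym : symmetric e) (conn : connected_graph e) (clawF : claw_free e).
Hypothesis deg : forall x, p <= #|nbhd e x|.

Section Stuck.
Variables (C B : {set T}).
Hypotheses (cover : vertex_cover e C) (CB : C \subset B).
Hypothesis stuck : forall w, ~~ can_recolor e p 1 B w.

Lemma white_nbr_in_cover w y : w \notin B -> e w y -> y \in C.
Proof.
move=> wB /(vertex_cover_edge cover) /orP [wC | //].
by rewrite (subsetP CB _ wC) in wB.
Qed.

Lemma white_nbr_two_white w y : w \notin B -> e w y -> 1 < #|nbhd e y :\: B|.
Proof.
move=> wB ewy; rewrite ltnNge; apply: contra (stuck w) => one_white.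
have nbrs_blue : nbhd e w \subset B.
  by apply/subsetP => u; rewrite inE => /(white_nbr_in_cover wB) /(subsetP CB).
rewrite /can_recolor wB (setIidPl nbrs_blue) deg /=.
by apply/existsP; exists y; rewrite inE ewy.
Qed.

Definition near_white : {set T} :=
  [set z | (z \notin B) || [exists y, e z y && (y \notin B)]].

Lemma near_white_closed y z : e y z -> y \in near_white -> z \in near_white.
Proof.
rewrite !inE => eyz /orP [yB | /existsP [w /andP [eyw wB]]].
  by apply/orP; right; apply/existsP; exists y; rewrite sym eyz.
have [zB | //] := boolP (z \in B); rewrite /=.
have [w' w'B [eyw' ww']] : exists2 w', w' \notin B & e y w' /\ w != w'.
  have /card_gt1P [x1 [x2 []]] := white_nbr_two_white wB (etrans (sym w y) eyw).
  rewrite !inE => /andP [x1B eyx1] /andP [x2B eyx2] x12.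
  have [wx1 | wx1] := eqVneq w x1; last by exists x1.
  by exists x2; rewrite // wx1.
have neq_z u : u \notin B -> u != z by apply: contraNneq => ->.
case/or3P: (clawF eyw eyw' eyz ww' (neq_z _ wB) (neq_z _ w'B)) => [eww' | ewz | ew'z].
- by rewrite (subsetP CB _ (white_nbr_in_cover wB eww')) in w'B.
- by apply/existsP; exists w; rewrite sym ewz.
- by apply/existsP; exists w'; rewrite sym ew'z.
Qed.

Lemma stuck_setT v : v \notin C -> v \in B -> B = setT.
Proof.
move=> vC vB; apply/setP => w; rewrite inE; apply/contraT => wB.
have : v \in near_white.
  by apply: connect_preserve near_white_closed _ _ (conn w v) _; rewrite inE wB.
rewrite inE vB /= => /existsP [y /andP [evy yB]].
have /orP [vC' | yC] := vertex_cover_edge cover evy; first by rewrite vC' in vC.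
by rewrite (subsetP CB _ yC) in yB.
Qed.

End Stuck.

Lemma setU1_cover_spreading C v :
  vertex_cover e C -> v \notin C -> spreading_set e p 1 (v |: C).
Proof.
move=> cover vC.
suff grow n B : #|~: B| < n -> C \subset B -> v \in B -> spreading_set e p 1 B.
  by apply: (grow _ _ (ltnSn _)); [exact: subsetUr | exact: setU11].
elim: n B => // n IH B white_n CB vB.
have [w recolor_w | stuck] := pickP (can_recolor e p 1 B).
  have [wB _ _] := and3P recolor_w.
  apply: (spreading_recolor recolor_w); apply: IH.
  - by move: white_n (cardsC B) (cardsC (w |: B)); rewrite cardsU1 wB; lia.
  - exact: subset_trans CB (subsetUr _ _).
  - by rewrite inE vB orbT.
rewrite (stuck_setT cover CB (fun w => negbT (stuck w)) vC vB).
exact: spreading_setT.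
Qed.

End CoverPlusVertex.

Theorem sigma_le_beta_addn1 (T : finType) (e : rel T) :
  symmetric e -> connected_graph e -> claw_free e -> cubic e ->
  sigma e 3 1 <= beta e + 1.
Proof.
move=> sym conn clawF cub; have [C cover ->] := beta_cover e.
have deg x : 3 <= #|nbhd e x| by rewrite cub.
have [v vC | all_in_C] := pickP (fun v => v \notin C).
  apply: leq_trans (sigma_le (setU1_cover_spreading sym conn clawF deg cover vC)) _.
  by rewrite cardsU1 vC addnC.
have -> : C = setT by apply/setP => x; move/negbFE: (all_in_C x); rewrite inE.
exact: leq_trans (sigma_le (spreading_setT e 3 1)) (leq_addr _ _).
Qed.

Section TightCover.
Variables (T : finType) (e : rel T).

Lemma card_nbhdI x (A : {set T}) : #|nbhd e x :&: A| = \sum_(y in A) e x y.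
Proof.
rewrite -sum1_card big_mkcond [RHS]big_mkcond; apply: eq_bigr => y _.
by rewrite !inE andbC; case: (y \in A); case: (e x y).
Qed.

Lemma sum_card_nbhdI (A B : {set T}) : symmetric e ->
  \sum_(x in A) #|nbhd e x :&: B| = \sum_(y in B) #|nbhd e y :&: A|.
Proof.
move=> sym; under eq_bigr do rewrite card_nbhdI.
under [RHS]eq_bigr do rewrite card_nbhdI.
by rewrite exchange_big; apply: eq_bigr => y _; apply: eq_bigr => x _; rewrite sym.
Qed.

Lemma claw_free_nbhd_independent (I : {set T}) x :
  claw_free e -> (forall y z, y \in I -> z \in I -> ~~ e y z) ->
  #|nbhd e x :&: I| <= 2.
Proof.
move=> clawF indep; rewrite leqNgt; apply/card_gt2P => [[a [b [c [[]]]]]].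
rewrite !inE => /andP [exa aI] /andP [exb bI] /andP [exc cI] [ab bc ca].
have ac : a != c by rewrite eq_sym.
have := clawF _ _ _ _ exa exb exc ab ac bc.
by rewrite !(negbTE (indep _ _ _ _)).
Qed.

Lemma cover_complement_independent (C : {set T}) :
  vertex_cover e C -> forall y z, y \in ~: C -> z \in ~: C -> ~~ e y z.
Proof.
move=> cover y z; rewrite !inE => yC zC; apply/negP => /(vertex_cover_edge cover).
by rewrite (negbTE yC) (negbTE zC).
Qed.

Lemma tight_cover_stuck (C : {set T}) p :
  symmetric e -> claw_free e -> cubic e ->
  vertex_cover e C -> 2 * #|C| <= 3 * #|~: C| ->
  forall w, ~~ can_recolor e p 1 C w.
Proof.
move=> sym clawF cub cover tight.
have white_nbrs u : u \in C -> #|nbhd e u :&: ~: C| = 2.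
  have le2 x : #|nbhd e x :&: ~: C| <= 2.
    exact: claw_free_nbhd_independent clawF (cover_complement_independent cover).
  have full w : w \in ~: C -> #|nbhd e w :&: C| = 3.
    move=> wC; rewrite (setIidPl _) ?cub //; apply/subsetP => y; rewrite inE.
    by move/(vertex_cover_edge cover); rewrite inE in wC; rewrite (negbTE wC).
  have [le_sum] :=
    leqif_sum (P := [in C]) (E2 := fun=> 2) (fun x _ => leqif_eq (le2 x)).
  rewrite -(sum_card_nbhdI _ _ sym) (eq_bigr _ full) !sum_nat_const in le_sum *.
  rewrite eqn_leq le_sum mulnC [#|~: C| * 3]mulnC tight => /esym /forallP all2 uC.
  exact/eqP/(implyP (all2 u)).
move=> w; apply/and3P => [[_ _ /existsP [u /andP [/setIP [_ uC]]]]].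
by rewrite setDE white_nbrs.
Qed.

End TightCover.

Lemma all_iota_ord n (P : nat -> bool) : all P (iota 0 n) -> forall i : 'I_n, P i.
Proof. by move=> /allP allP i; apply: allP; rewrite mem_iota /= ltn_ord. Qed.

Arguments all_iota_ord {n} P.

Lemma card_ord_count n (P : nat -> bool) : #|[set i : 'I_n | P i]| = count P (iota 0 n).
Proof.
by rewrite cardsE cardE /enum_mem size_filter -enumT -val_enum_ord count_map.
Qed.

Lemma consecutive_connected n (e : rel 'I_n.+1) :
  connect_sym e -> (forall i j : 'I_n.+1, val j = i.+1 -> e i j) -> connected_graph e.
Proof.
move=> csym step.
suff from0 x : connect e ord0 x.
  by move=> x y; apply: connect_trans (from0 y); rewrite csym.
case: x => k; elim: k => [|k IH] lt_k.
  by rewrite (_ : Ordinal lt_k = ord0) //; apply: val_inj.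
by apply: connect_trans (IH (ltnW lt_k)) (connect1 (step _ _ _)).
Qed.

(* The vertices are numbered along a Hamiltonian cycle. *)
Definition example_edges : seq (nat * nat) :=
  [:: (0, 1); (1, 2); (2, 3); (3, 4); (4, 5); (5, 6); (6, 7); (7, 8); (8, 9); (9, 0);
      (0, 2); (1, 3); (4, 6); (5, 8); (7, 9)].

Definition example_adj (i j : nat) : bool :=
  ((i, j) \in example_edges) || ((j, i) \in example_edges).

Definition example_graph : rel 'I_10 := fun x y => example_adj x y.

Definition example_independent : seq nat := [:: 0; 3; 5; 7].

Definition example_cover : {set 'I_10} :=
  [set x : 'I_10 | (x : nat) \notin example_independent].

Lemma example_symmetric : symmetric example_graph.
Proof. by move=> x y; rewrite /example_graph /example_adj orbC. Qed.

Lemma example_simple : simple_graph example_graph.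
Proof.
have loopless : all (fun i => ~~ example_adj i i) (iota 0 10) by vm_compute.
by split=> [|x]; [exact: example_symmetric | exact/negbTE/(all_iota_ord _ loopless x)].
Qed.

Lemma example_cubic : cubic example_graph.
Proof.
have deg3 : all (fun i => count (example_adj i) (iota 0 10) == 3) (iota 0 10).
  by vm_compute.
move=> x; rewrite /nbhd /example_graph card_ord_count.
exact/eqP/(all_iota_ord _ deg3 x).
Qed.

Lemma example_claw_free : claw_free example_graph.
Proof.
have claws : all (fun x => all (fun a => all (fun b => all (fun c =>
    [==> example_adj x a, example_adj x b, example_adj x c, a != b, a != c, b != c
     => [|| example_adj a b, example_adj a c | example_adj b c]]
  ) (iota 0 10)) (iota 0 10)) (iota 0 10)) (iota 0 10) by vm_compute.
move=> x a b c xa xb xc ab ac bc.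
have /all_iota_ord/(_ a)/all_iota_ord/(_ b)/all_iota_ord/(_ c) :=
  all_iota_ord _ claws x.
move=> /implyP/(_ xa)/implyP/(_ xb)/implyP/(_ xc).
by move=> /implyP/(_ ab)/implyP/(_ ac)/implyP/(_ bc).
Qed.

Lemma example_connected : connected_graph example_graph.
Proof.
have cycle : all (fun k => (k.+1 < 10) ==> example_adj k k.+1) (iota 0 10).
  by vm_compute.
apply: consecutive_connected (sym_connect_sym example_symmetric) _ => i j ji.
by have := all_iota_ord _ cycle i; rewrite /example_graph ji -ji ltn_ord.
Qed.

Lemma example_cover_card : #|example_cover| = 6.
Proof.
by rewrite /example_cover (@card_ord_count 10 (fun i => i \notin example_independent)).
Qed.

Lemma example_vertex_cover : vertex_cover example_graph example_cover.
Proof.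
have covered : all (fun i => all (fun j =>
    example_adj i j ==> (i \notin example_independent) || (j \notin example_independent)
  ) (iota 0 10)) (iota 0 10) by vm_compute.
apply/vertex_coverP => x y; rewrite !in_set.
exact/implyP/(all_iota_ord _ (all_iota_ord _ covered x)).
Qed.

Lemma example_sigma_ge : 7 <= sigma example_graph 3 1.
Proof.
have [S spreadS ->] := sigma_spreading example_graph 3 1.
rewrite ltnNge; apply/negP => small.
have deg x : #|nbhd example_graph x| <= 3 by rewrite example_cubic.
have cover := spreading_vertex_cover example_symmetric deg spreadS.
have tight : 2 * #|S| <= 3 * #|~: S| by move: small (cardsC S); rewrite card_ord; lia.
have stuck :=
  tight_cover_stuck 3 example_symmetric example_claw_free example_cubic cover tight.
by move: small; rewrite (spreading_stuck stuck spreadS) cardsT card_ord.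
Qed.

Lemma example_sigma_eq : sigma example_graph 3 1 = beta example_graph + 1.
Proof.
have := sigma_le_beta_addn1
  example_symmetric example_connected example_claw_free example_cubic.
have := beta_le example_vertex_cover; rewrite example_cover_card.
by have := example_sigma_ge; lia.
Qed.

Theorem proposition3p12 :
  (forall (T : finType) (e : rel T),
      simple_graph e -> connected_graph e -> claw_free e -> cubic e ->
      sigma e 3 1 <= beta e + 1)
  /\
  (exists (T : finType) (e : rel T),
      [/\ simple_graph e, connected_graph e, claw_free e, cubic e
        & sigma e 3 1 = beta e + 1]).
Proof.
split=> [T e [sym _] | ]; first exact: sigma_le_beta_addn1.
exists 'I_10, example_graph; split.
- exact: example_simple.
- exact: example_connected.
- exact: example_claw_free.
- exact: example_cubic.
- exact: example_sigma_eq.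
Qed.
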